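(* Let $d$ be a positive integer and let $A \in \mathbb{R}^{[m]\times[n]}$. Suppose that for every vector $b\in\mathbb{R}^{[m]}$ the solution graph $G(R(A,b))$ is connected. If $m\le 3$ or $n\le 2$, then $A$ has an elimination ordering.
   Context: Fix a positive integer $d$ and let $D=\{0,1,\dots,d\}$; $[n]=\{1,\dots,n\}$. For $A\in\mathbb{R}^{[m]\times[n]}$ and $b\in\mathbb{R}^{[m]}$, $R(A,b)=\{x\in D^{[n]} : Ax\ge b\}$. For $R\subseteq D^{[n]}$, the solution graph $G(R)$ is the undirected graph with vertex set $R$ in which $x,y$ are adjacent iff they differ in exactly one coordinate. A matrix $A=(a_{ij})$ with column index set $J$ can be eliminated at column $j\in J$ if (i) for every row $i$ with $a_{ij}>0$ we have $a_{ij'}=0$ for all $j'\in J\setminus\{j\}$, or (ii) for every row $i$ with $a_{ij}<0$ we have $a_{ij'}=0$ for all $j'\in J\setminus\{j\}$. For $J'\subseteq[n]$, $\mathrm{elm}(A,J')$ is the submatrix of $A$ obtained by deleting the columns indexed by $J'$. A sequence $(j_1,\dots,j_n)$ of the elements of $[n]$ is an elimination ordering (EO) of $A$ if for every $t\in[n]$ the matrix $\mathrm{elm}(A,\{j_1,\dots,j_{t-1}\})$ can be eliminated at column $j_t$. *)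

From HB Require Import structures.
From mathcomp Require Import all_boot all_order all_algebra.
From mathcomp Require Import reals.
Set Implicit Arguments. Unset Strict Implicit. Unset Printing Implicit Defensive.
Import Order.TTheory GRing.Theory Num.Theory.
Local Open Scope ring_scope.

(* Points of D^[n] with D = {0,...,d}: finite functions 'I_n -> 'I_d.+1. *)
Definition point (d n : nat) := {ffun 'I_n -> 'I_d.+1}.

Definition solset (R : realType) (d m n : nat) (A : 'M[R]_(m, n)) (b : 'I_m -> R)
  : {set point d n} :=
  [set x : point d n | [forall i : 'I_m,
      b i <= \sum_(j < n) A i j * ((x j : nat)%:R)]].

Definition adj1 (d n : nat) (x y : point d n) : bool :=
  #|[set j : 'I_n | x j != y j]| == 1%N.

Definition sol_edge (d n : nat) (S : {set point d n}) : rel (point d n) :=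
  fun x y => [&& x \in S, y \in S & adj1 x y].

(* G(S) is connected: any two vertices are joined by a path inside S
   (the graph with empty vertex set counts as connected). *)
Definition sol_graph_connected (d n : nat) (S : {set point d n}) : Prop :=
  forall x y, x \in S -> y \in S -> connect (sol_edge S) x y.

Definition can_elim (R : realType) (m n : nat) (A : 'M[R]_(m, n))
  (J : {set 'I_n}) (j : 'I_n) : bool :=
  (j \in J) &&
  ([forall i : 'I_m, (0 < A i j) ==>
       [forall j' in J, (j' != j) ==> (A i j' == 0)]]
   || [forall i : 'I_m, (A i j < 0) ==>
       [forall j' in J, (j' != j) ==> (A i j' == 0)]]).

Fixpoint elim_seq (R : realType) (m n : nat) (A : 'M[R]_(m, n))
  (J : {set 'I_n}) (s : seq 'I_n) : bool :=
  match s with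
  | [::] => true
  | j :: s' => can_elim A J j && elim_seq A (J :\ j) s'
  end.

Definition elimination_ordering (R : realType) (m n : nat) (A : 'M[R]_(m, n))
  (s : seq 'I_n) : bool :=
  perm_eq s (enum 'I_n) && elim_seq A [set: 'I_n] s.

Definition has_EO (R : realType) (m n : nat) (A : 'M[R]_(m, n)) : Prop :=
  exists s : seq 'I_n, elimination_ordering A s.

(* Induct on the number of nonzero columns.  If column j can be eliminated, then
   fixing x_j at the end of D where every row that also involves other columns is
   slackest shows that zeroing column j keeps all solution graphs connected, and an
   elimination ordering of the reduced matrix extends by j.  So it suffices to show
   that a nonzero matrix with connected solution graphs has an eliminable nonzero
   column.

   The obstruction is a corner argument.  Reflect some coordinates x_k |-> d - x_k
   and suppose that every nonzero column k has a row whose entry at k is negative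
   and smaller than the row's sum over a set Y of columns.  Let b be the pointwise
   minimum of the row values at the corner 0 and at its inward neighbour 1_Y: both
   points are feasible, but no nonzero coordinate of the corner can move, so they
   lie in different components.

   With two rows this pattern always occurs.  Hence two rows never have opposite
   signs in two columns: restricted to these rows, the matrix would still have
   connected solution graphs but no elimination ordering.  For n <= 2 this alone
   contradicts non-eliminability; for m <= 3 it forces three columns whose pairs of
   opposite rows form a cycle, which again yields the corner pattern. *)

From Pilot Require Import Defs.
From HB Require Import structures.
From mathcomp Require Import all_boot all_order all_algebra.
From mathcomp Require Import reals.
From mathcomp Require Import lra zify.
Set Implicit Arguments. Unset Strict Implicit. Unset Printing Implicit Defensive.
Import Order.TTheory GRing.Theory Num.Theory.
Local Open Scope ring_scope.

Section Signs.
Variable R : realType.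
Implicit Types a b c : R.

Lemma mulr_lt0P a b : a * b < 0 -> (0 < a /\ b < 0) \/ (a < 0 /\ 0 < b).
Proof.
move=> ab; have [a0|a0|a0] := ltrgtP a 0; have [b0|b0|b0] := ltrgtP b 0;
  by [left | right | exfalso; subst; nra].
Qed.

Lemma mulr_lt0_neq0 a b : a * b < 0 -> a != 0 /\ b != 0.
Proof. by move=> ab; split; apply/eqP => z; move: ab; rewrite z ?mul0r ?mulr0 ltxx. Qed.

Lemma mulr_lt0_split a b c : a * c < 0 -> b != 0 -> a * b < 0 \/ b * c < 0.
Proof.
move=> ac /eqP b0; have [a0|a0|a0] := ltrgtP a 0; have [b1|b1|b1] := ltrgtP b 0;
  by [left; nra | right; nra | exfalso; subst; nra].
Qed.

End Signs.

Lemma connect_homo (T T' : finType) (e : rel T) (e' : rel T') (f : T -> T') :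
  (forall u v, e u v -> connect e' (f u) (f v)) ->
  forall x y, connect e x y -> connect e' (f x) (f y).
Proof.
move=> ef x _ /connectP[p + ->]; elim: p x => //= y p IHp x /andP[/ef exy /IHp].
exact: connect_trans.
Qed.

Lemma ord_le2_neq n (i j k : 'I_n) : (n <= 2)%N -> j != i -> k != i -> j = k.
Proof.
move=> n2 /eqP ji /eqP ki; apply: ord_inj.
have := ltn_ord i; have := ltn_ord j; have := ltn_ord k.
have {}ji : nat_of_ord j <> i by move=> e; apply: ji; apply: ord_inj.
have {}ki : nat_of_ord k <> i by move=> e; apply: ki; apply: ord_inj.
lia.
Qed.

Lemma ord_le3_cases m (P Q S X : 'I_m) : (m <= 3)%N ->
  P != Q -> S != P -> S != Q -> [\/ X = P, X = Q | X = S].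
Proof.
move=> m3 PQ SP SQ.
have [->|XP] := eqVneq X P; first exact: Or31.
have [->|XQ] := eqVneq X Q; first exact: Or32.
have [->|XS] := eqVneq X S; first exact: Or33.
have neq (a b : 'I_m) : a != b -> nat_of_ord a <> b by move=> /eqP ab e; apply: ab; apply: ord_inj.
move: (neq _ _ PQ) (neq _ _ SP) (neq _ _ SQ) (neq _ _ XP) (neq _ _ XQ) (neq _ _ XS).
move: (ltn_ord P) (ltn_ord Q) (ltn_ord S) (ltn_ord X); lia.
Qed.

Section EliminationOrderings.
Variables (R : realType) (m n : nat).
Implicit Types (A B : 'M[R]_(m, n)) (J : {set 'I_n}) (s : seq 'I_n).

Definition nzcol A j := [exists i, A i j != 0].

Definition zero_col A j : 'M[R]_(m, n) := \matrix_(i, k) if k == j then 0 else A i k.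

Definition opp_rows A (p q : 'I_m) j := A p j * A q j < 0.

Lemma opp_rowsC A p q j : opp_rows A p q j = opp_rows A q p j.
Proof. by rewrite /opp_rows mulrC. Qed.

Lemma opp_rows_neq A p q j : opp_rows A p q j -> p != q.
Proof. by apply: contraTneq => ->; rewrite /opp_rows -leNgt -expr2 sqr_ge0. Qed.

Lemma opp_rows_split A p q r j :
  opp_rows A p r j -> A q j != 0 -> opp_rows A p q j \/ opp_rows A q r j.
Proof. exact: mulr_lt0_split. Qed.

Lemma opp_rows_sub2 A p q x y j : (x == p) || (x == q) -> (y == p) || (y == q) ->
  opp_rows A x y j -> opp_rows A p q j.
Proof.
case/orP=> /eqP-> /orP[]/eqP-> oppj //;
  first [by rewrite opp_rowsC | by move: (opp_rows_neq oppj); rewrite eqxx].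
Qed.

Lemma can_elim_eq A B J j :
  (forall i k, k \in J -> A i k = B i k) -> can_elim A J j = can_elim B J j.
Proof.
move=> AB; rewrite /can_elim; case jJ: (j \in J) => //=.
congr (_ || _); apply: eq_forallb => i; rewrite AB //; congr (_ ==> _);
  by apply: eq_forallb => k; case kJ: (k \in J); rewrite //= AB.
Qed.

Lemma elim_seq_eq A B J s :
  (forall i k, k \in J -> A i k = B i k) -> elim_seq A J s = elim_seq B J s.
Proof.
elim: s J => //= j s IHs J AB; rewrite (can_elim_eq j AB) IHs // => i k.
by rewrite in_setD1 => /andP[_ /AB].
Qed.

Lemma can_elim_subset A J J' j :
  can_elim A J j -> j \in J' -> J' \subset J -> can_elim A J' j.
Proof.
rewrite /can_elim => /andP[_ elim_j] -> /subsetP J'J /=.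
by case/orP: elim_j => /forallP elim_j; apply/orP; [left | right];
  apply/forallP => i; apply/implyP => /(implyP (elim_j i)) /forallP zero_i;
  apply/forallP => k; apply/implyP => /J'J; apply/implyP/zero_i.
Qed.

Lemma elim_seq_rem A J s j : elim_seq A J s -> elim_seq A (J :\ j) (rem j s).
Proof.
elim: s J => //= k s IHs J /andP[elim_k elim_s].
have [<- //|kj] := eqVneq k j.
rewrite /= (can_elim_subset elim_k) ?subD1set //=; last first.
  by rewrite in_setD1 kj; case/andP: elim_k.
by rewrite setDDl setUC -setDDl; apply: IHs.
Qed.

Lemma has_EO_zero A : (forall j, ~~ nzcol A j) -> has_EO A.
Proof.
move=> A0; exists (enum 'I_n); rewrite /elimination_ordering perm_refl /=.
suff elim_uniq s J : uniq s -> {subset s <= J} -> elim_seq A J s.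
  by apply: elim_uniq => [|j]; rewrite ?enum_uniq ?in_setT.
elim: s J => //= j s IHs J /andP[js us] sJ; apply/andP; split.
  rewrite /can_elim sJ ?mem_head //=; apply/orP; left; apply/forallP => i.
  by move/existsPn: (A0 j) => /(_ i); rewrite negbK => /eqP ->; rewrite ltxx.
apply: IHs => // k ks; rewrite in_setD1 sJ ?inE ?ks ?orbT // andbT.
by apply: contraNneq js => <-.
Qed.

Lemma has_EO_zero_col A j : can_elim A setT j -> has_EO (zero_col A j) -> has_EO A.
Proof.
move=> elim_j [s /andP[perm_s elim_s]].
have js : j \in s by rewrite (perm_mem perm_s) mem_enum.
exists (j :: rem j s); rewrite /elimination_ordering /= elim_j /=; apply/andP; split.
  by apply: (@perm_trans _ s); rewrite // perm_sym perm_to_rem.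
rewrite (@elim_seq_eq _ (zero_col A j)); first exact: elim_seq_rem.
by move=> i k; rewrite in_setD1 mxE => /andP[/negbTE -> _].
Qed.

Lemma opp_rows_not_can_elim A J p q j k :
  k \in J -> k != j -> opp_rows A p q j -> A p k != 0 -> A q k != 0 ->
  ~~ can_elim A J j.
Proof.
move=> kJ kj opp_j Apk Aqk; rewrite /can_elim negb_and negb_or; apply/orP; right.
have witness i : A i k != 0 -> ~~ [forall k', (k' \in J) ==> (k' != j) ==> (A i k' == 0)].
  by move=> Aik; apply/forallPn; exists k; rewrite kJ kj.
by case: (mulr_lt0P opp_j) => [[p0 q0] | [p0 q0]]; apply/andP; split; apply/forallPn;
  [exists p | exists q | exists q | exists p]; rewrite negb_imply ?p0 ?q0 witness.
Qed.

Lemma opp_rows_no_EO A p q j1 j2 :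
  j1 != j2 -> opp_rows A p q j1 -> opp_rows A p q j2 -> ~ has_EO A.
Proof.
move=> j12 opp1 opp2 [s /andP[perm_s elim_s]].
have [p1 q1] := mulr_lt0_neq0 opp1; have [p2 q2] := mulr_lt0_neq0 opp2.
suff j1_notin t J : j1 \in J -> j2 \in J -> elim_seq A J t -> j1 \notin t.
  by move: (j1_notin s _ (in_setT j1) (in_setT j2) elim_s); rewrite (perm_mem perm_s) mem_enum.
elim: t J => //= k t IHt J j1J j2J /andP[elim_k elim_t].
have kj1 : k != j1.
  by apply: contraTneq elim_k => ->; rewrite (opp_rows_not_can_elim j2J _ opp1 p2 q2) // eq_sym.
have kj2 : k != j2.
  by apply: contraTneq elim_k => ->; rewrite (opp_rows_not_can_elim j1J j12 opp2 p1 q1).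
rewrite in_cons eq_sym (negbTE kj1) /=; apply: IHt elim_t;
  by rewrite in_setD1 ?j1J ?j2J ?(eq_sym j1) ?(eq_sym j2) ?kj1 ?kj2.
Qed.

Lemma not_can_elimT A j : ~~ can_elim A setT j ->
  (exists i, 0 < A i j /\ exists2 k, k != j & A i k != 0) /\
  (exists i, A i j < 0 /\ exists2 k, k != j & A i k != 0).
Proof.
rewrite /can_elim in_setT negb_or => /andP[/forallPn[i pos_i] /forallPn[i' neg_i']].
move: pos_i neg_i'; rewrite !negb_imply.
move=> /andP[Aij /forallPn[k nz_k]] /andP[Ai'j /forallPn[k' nz_k']].
move: nz_k nz_k'; rewrite !negb_imply => /andP[_ /andP[kj Aik]] /andP[_ /andP[k'j Ai'k']].
by split; [exists i; split => //; exists k | exists i'; split => //; exists k'].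
Qed.

End EliminationOrderings.


Section SolutionGraphs.
Variables (R : realType) (d m n : nat).
Implicit Types (A : 'M[R]_(m, n)) (b : 'I_m -> R) (S : {set point d n}).
Implicit Types (x y z u v : point d n) (c t : 'I_d.+1).

Definition solgraphs_connected A := forall b, sol_graph_connected (solset d A b).

Definition rowdot A x i : R := \sum_j A i j * (x j : nat)%:R.

Lemma in_solset A b x : (x \in solset d A b) = [forall i, b i <= rowdot A x i].
Proof. by rewrite inE. Qed.

Definition upd x j c : point d n := [ffun k => if k == j then c else x k].

Lemma upd_id x j : upd x j (x j) = x.
Proof. by apply/ffunP => k; rewrite ffunE; case: eqP => // ->. Qed.

Lemma upd_upd x j c c' : upd (upd x j c) j c' = upd x j c'.
Proof. by apply/ffunP => k; rewrite !ffunE; case: eqP. Qed.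

Lemma adj1C x y : Defs.adj1 x y = Defs.adj1 y x.
Proof.
rewrite /Defs.adj1 (_ : [set k | x k != y k] = [set k | y k != x k]) //.
by apply/setP => k; rewrite !inE eq_sym.
Qed.

Lemma sol_edge_sym S : symmetric (sol_edge S).
Proof. by move=> x y; rewrite /sol_edge andbCA adj1C. Qed.

Lemma adj1_upd x j c : x j != c -> Defs.adj1 x (upd x j c).
Proof.
move=> xjc; rewrite /Defs.adj1 (_ : [set k | _] = [set j]) ?cards1 //.
by apply/setP => k; rewrite !inE ffunE; case: (eqVneq k j) => [->|]; rewrite ?eqxx.
Qed.

Lemma adj1P x y : Defs.adj1 x y -> exists2 k, x k != y k & y = upd x k (y k).
Proof.
move=> /cards1P[k diff_k]; have: k \in [set k | x k != y k] by rewrite diff_k inE.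
rewrite inE => xyk; exists k => //; apply/ffunP => l; rewrite ffunE.
case: eqVneq => [-> //|lk]; apply/eqP; rewrite eq_sym; apply: contraNT lk => xyl.
by rewrite -in_set1 -diff_k inE.
Qed.

Lemma upd_updC x j k c t : j != k -> upd (upd x j c) k t = upd (upd x k t) j c.
Proof.
move=> jk; apply/ffunP => l; rewrite !ffunE.
by case: (eqVneq l j) => [->|_] //=; rewrite (negbTE jk).
Qed.

Lemma adj1_upd2 u v j c : Defs.adj1 u v ->
  upd u j c = upd v j c \/ Defs.adj1 (upd u j c) (upd v j c).
Proof.
move=> /adj1P[k uvk ->]; have [<-|kj] := eqVneq k j; first by left; rewrite upd_upd.
by right; rewrite upd_updC // adj1_upd // ffunE (negbTE kj).
Qed.

Lemma connect_upd S x j c :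
  (forall z t, (upd z j t \in S) = (z \in S)) -> x \in S ->
  connect (sol_edge S) x (upd x j c).
Proof.
move=> S_upd xS; have [<-|xjc] := eqVneq (x j) c; first by rewrite upd_id.
by apply: connect1; rewrite /sol_edge xS S_upd xS adj1_upd.
Qed.

Lemma rowdot_eq A x y i : (forall j, nzcol A j -> x j = y j) -> rowdot A x i = rowdot A y i.
Proof.
move=> xy; apply: eq_bigr => j _; have [/xy -> //|] := boolP (nzcol A j).
by move/existsPn/(_ i); rewrite negbK => /eqP ->; rewrite !mul0r.
Qed.

Lemma rowdot_upd A x j c i :
  rowdot A (upd x j c) i = rowdot A x i + A i j * ((c : nat)%:R - (x j : nat)%:R).
Proof.
rewrite /rowdot (bigD1 j) //= [in RHS](bigD1 j) //= ffunE eqxx.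
rewrite (eq_bigr (fun k => A i k * (x k : nat)%:R)) => [|k kj]; last by rewrite ffunE (negbTE kj).
by rewrite mulrBr addrAC addrCA subrr addr0.
Qed.

Lemma rowdot_zero_col A x j i :
  rowdot A x i = rowdot (zero_col A j) x i + A i j * (x j : nat)%:R.
Proof.
rewrite /rowdot (bigD1 j) //= [X in _ = X + _](bigD1 j) //= !mxE eqxx mul0r add0r addrC.
by congr (_ + _); apply: eq_bigr => k kj; rewrite mxE (negbTE kj).
Qed.

Lemma nzcol_zero_col A j k : nzcol (zero_col A j) k -> k != j.
Proof. by apply: contraTneq => ->; apply/existsPn => i; rewrite mxE eqxx negbK. Qed.

Lemma can_elim_extreme A j : can_elim A setT j ->
  exists c, forall i t, A i j * (c : nat)%:R < A i j * (t : nat)%:R ->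
    forall k, k != j -> A i k = 0.
Proof.
have zero_i (s : pred R) :
    [forall i, s (A i j) ==> [forall k in setT, (k != j) ==> (A i k == 0)]] ->
    forall i, s (A i j) -> forall k, k != j -> A i k = 0.
  move=> /forallP elim_j i /(implyP (elim_j i)) /forallP zero_i k kj.
  by apply/eqP; move: (zero_i k); rewrite in_setT kj.
case/andP=> _ /orP[/(zero_i (fun a => 0 < a)) | /(zero_i (fun a => a < 0))] elim_j;
  [exists ord0 | exists ord_max] => i t /= lt_t; apply: elim_j.
  by move: lt_t; rewrite mulr0; apply: contraTT; rewrite -!leNgt => /mulr_le0_ge0; apply.
move: lt_t; apply: contraTT; rewrite -!leNgt => /ler_wpM2l; apply.
by rewrite ler_nat -ltnS ltn_ord.
Qed.

(* Edges of G(R(A, b0 + c A_j)) project along x_j := c to walks of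
   G(R(zero_col A j, b0)). *)
Lemma solgraphs_connected_zero_col A j :
  can_elim A setT j -> solgraphs_connected A -> solgraphs_connected (zero_col A j).
Proof.
move=> elim_j connA b0 x y xS0 yS0; set A0 := zero_col A j; set S0 := solset d A0 b0.
have [c c_extreme] := can_elim_extreme elim_j.
pose b i := b0 i + A i j * (c : nat)%:R.
have A0_upd z t i : rowdot A0 (upd z j t) i = rowdot A0 z i.
  by apply: rowdot_eq => k /nzcol_zero_col kj; rewrite ffunE (negbTE kj).
have S0_upd z t : (upd z j t \in S0) = (z \in S0).
  by rewrite !in_solset; apply: eq_forallb => i; rewrite A0_upd.
have upd_S z : z \in S0 -> upd z j c \in solset d A b.
  rewrite !in_solset => /forallP S0z; apply/forallP => i.
  by rewrite (rowdot_zero_col _ _ j) A0_upd ffunE eqxx lerD2r; apply: S0z.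
have S_S0 z : z \in solset d A b -> z \in S0.
  rewrite !in_solset => /forallP Sz; apply/forallP => i; move: (Sz i).
  rewrite (rowdot_zero_col _ _ j) /b; case: (lerP (A i j * (z j : nat)%:R) (A i j * (c : nat)%:R)).
    by move=> le_zc; lra.
  move=> /c_extreme row0 _; have A0z w : rowdot A0 w i = 0.
    by apply: big1 => k _; rewrite mxE; case: eqVneq => [_|/row0 ->]; rewrite mul0r.
  by move: xS0; rewrite in_solset => /forallP /(_ i); rewrite !A0z.
have edge_upd u v : sol_edge (solset d A b) u v ->
    connect (sol_edge S0) (upd u j c) (upd v j c).
  case/and3P=> /S_S0 uS0 /S_S0 vS0 /(adj1_upd2 j c) [-> //|uv].
  by apply: connect1; rewrite /sol_edge !S0_upd uS0 vS0.
have sym0 := sym_connect_sym (sol_edge_sym S0).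
apply: connect_trans (connect_upd c S0_upd xS0) _.
rewrite sym0; apply: connect_trans (connect_upd c S0_upd yS0) _; rewrite sym0.
rewrite -(upd_upd x j c c) -(upd_upd y j c c); apply: connect_homo edge_upd _ _ _.
exact: connA (upd_S _ xS0) (upd_S _ yS0).
Qed.

Lemma component_fixes_nzcols A b x0 :
  (forall k t, nzcol A k -> t != x0 k -> exists i, rowdot A (upd x0 k t) i < b i) ->
  forall y, connect (sol_edge (solset d A b)) x0 y -> forall k, nzcol A k -> y k = x0 k.
Proof.
move=> blocked y x0y; pose P := [pred u : point d n | [forall k, nzcol A k ==> (u k == x0 k)]].
suff closedP : closed (sol_edge (solset d A b)) P.
  have P0 : x0 \in P by apply/forallP => k; rewrite eqxx implybT.
  move: (closed_connect closedP x0y); rewrite P0 => /esym /forallP Py k nzk.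
  by apply/eqP; move/implyP: (Py k); apply.
apply: intro_closed; first exact/sym_connect_sym/sol_edge_sym.
move=> u v /and3P[_ vS /adj1P[k uvk v_upd]] /forallP Pu.
have Pu' l : nzcol A l -> u l = x0 l by move=> nzl; apply/eqP; move/implyP: (Pu l); apply.
have [nzk|zk] := boolP (nzcol A k); last first.
  rewrite v_upd; apply/forallP => l; rewrite ffunE.
  by case: (eqVneq l k) => [->|_]; [rewrite (negbTE zk) | exact: Pu].
have vk : v k != x0 k by rewrite -(Pu' _ nzk) eq_sym.
have [i lt_i] := blocked k (v k) nzk vk.
move: vS; rewrite in_solset => /forallP /(_ i).
rewrite leNgt (rowdot_eq _ (y := upd x0 k (v k))) ?lt_i //.
by move=> l nzl; rewrite {1}v_upd !ffunE; case: (eqVneq l k) => // _; exact: Pu'.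
Qed.

Definition keep_rows A (P : {pred 'I_m}) : 'M[R]_(m, n) :=
  \matrix_(i, k) if i \in P then A i k else 0.

Lemma rowdot_lower_bound A x i : - (\sum_k `|A i k| * d%:R) <= rowdot A x i.
Proof.
rewrite -sumrN; apply: ler_sum => k _.
have xd : ((x k : nat)%:R : R) <= d%:R by rewrite ler_nat -ltnS ltn_ord.
have x0 : (0 : R) <= (x k : nat)%:R by rewrite ler0n.
by have [Aik|Aik] := lerP 0 (A i k); [rewrite ger0_norm | rewrite ltr0_norm]; nra.
Qed.

(* The dropped rows come back as the vacuous constraints of rowdot_lower_bound. *)
Lemma solgraphs_connected_keep_rows A P :
  solgraphs_connected A -> solgraphs_connected (keep_rows A P).
Proof.
move=> connA b x y xS yS.
have rowdot_out z i : i \notin P -> rowdot (keep_rows A P) z i = 0.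
  by move=> iP; apply: big1 => k _; rewrite mxE (negbTE iP) mul0r.
have b_out i : i \notin P -> b i <= 0.
  by move=> iP; move: xS; rewrite in_solset => /forallP /(_ i); rewrite rowdot_out.
pose bA i := if i \in P then b i else - (\sum_k `|A i k| * d%:R).
have E : solset d (keep_rows A P) b = solset d A bA.
  apply/setP => z; rewrite !in_solset; apply: eq_forallb => i; rewrite /bA.
  case: (boolP (i \in P)) => iP; last by rewrite rowdot_out // b_out // rowdot_lower_bound.
  by congr (_ <= _); apply: eq_bigr => k _; rewrite mxE iP.
by rewrite E in xS yS *; apply: connA.
Qed.

End SolutionGraphs.

Lemma has_EO_by_elimination (R : realType) (d m n : nat) (C : 'M[R]_(m, n) -> Prop) :
  (forall A j, C A -> C (zero_col A j)) ->
  (forall A, C A -> solgraphs_connected d A ->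
     (forall j, nzcol A j -> ~~ can_elim A setT j) -> forall j, ~~ nzcol A j) ->
  forall A, C A -> solgraphs_connected d A -> has_EO A.
Proof.
move=> C_zero_col stuck A; have [k] := ubnP #|[set j | nzcol A j]|.
elim: k A => // k IHk A; rewrite ltnS => nz_le CA connA.
case: (pickP (fun j => nzcol A j && can_elim A setT j)) => [j /andP[nzj elim_j] | none]; last first.
  apply/has_EO_zero/(stuck _ CA connA) => j nzj.
  by move: (none j); rewrite nzj /= => ->.
apply: (has_EO_zero_col elim_j).
apply: IHk (C_zero_col _ _ CA) (solgraphs_connected_zero_col elim_j connA).
apply: leq_trans nz_le; apply: proper_card; apply/properP; split.
  apply/subsetP => l; rewrite !inE => /existsP[i]; rewrite mxE.
  by case: ifP => [_|_ Ail]; [rewrite eqxx | apply/existsP; exists i].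
exists j; first by rewrite inE.
by rewrite inE; apply/existsPn => i; rewrite mxE eqxx negbK.
Qed.

Section Corner.
Variables (R : realType) (d m n : nat).
Hypothesis d_gt0 : (0 < d)%N.
Implicit Types (A : 'M[R]_(m, n)) (F Y : {set 'I_n}).

Definition flip_cols A F : 'M[R]_(m, n) := \matrix_(i, k) if k \in F then - A i k else A i k.

Definition corner F : point d n := [ffun k => if k \in F then ord_max else ord0].

Definition inward F Y : point d n :=
  [ffun k => if k \in Y then (if k \in F then inord d.-1 else inord 1) else corner F k].

Lemma corner_natE F k : ((corner F k : nat)%:R : R) = if k \in F then d%:R else 0.
Proof. by rewrite ffunE; case: ifP. Qed.

Lemma inward_natE F Y k : ((inward F Y k : nat)%:R : R) =
  (corner F k : nat)%:R + if k \in Y then (if k \in F then -1 else 1) else 0.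
Proof.
rewrite [inward F Y k]ffunE; case: ifP => _; last by rewrite addr0.
rewrite corner_natE; case: ifP => _; last by rewrite inordK ?add0r.
by rewrite inordK ?ltnS ?leq_pred // -[in RHS](prednK d_gt0) -addn1 natrD addrK.
Qed.

Lemma rowdot_inward A F Y i :
  rowdot A (inward F Y) i = rowdot A (corner F) i + \sum_(k in Y) flip_cols A F i k.
Proof.
rewrite /rowdot (big_mkcond (mem Y)) -big_split /=; apply: eq_bigr => k _.
rewrite inward_natE mulrDr mxE; case: ifP => _; last by rewrite mulr0.
by case: ifP => _; rewrite ?mulrN1 ?mulr1.
Qed.

Lemma rowdot_upd_corner A F k t i : flip_cols A F i k < 0 -> t != corner F k ->
  rowdot A (upd (corner F) k t) i <= rowdot A (corner F) i + flip_cols A F i k.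
Proof.
rewrite rowdot_upd lerD2l corner_natE mxE [corner F k]ffunE.
have td : ((t : nat)%:R : R) <= d%:R by rewrite ler_nat -ltnS ltn_ord.
case: ifP => _ Aik tk.
  have : ((t : nat) + 1 <= d)%N.
    by rewrite addn1 ltn_neqAle -ltnS ltn_ord andbT; apply: contraNneq tk => dt; apply/eqP/val_inj.
  by rewrite -(ler_nat R) natrD => ?; nra.
have : (1 <= t)%N by rewrite lt0n; apply: contraNneq tk => t0; apply/eqP/val_inj.
by rewrite -(ler_nat R) => ?; nra.
Qed.

Lemma corner_not_connected A F Y :
  (exists2 j, j \in Y & nzcol A j) ->
  (forall j, nzcol A j -> exists i,
     flip_cols A F i j < 0 /\ flip_cols A F i j < \sum_(k in Y) flip_cols A F i k) ->
  ~ solgraphs_connected d A.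
Proof.
move=> [j0 j0Y nzj0] down connA; set x0 := corner F; set y0 := inward F Y.
pose b i := Num.min (rowdot A x0 i) (rowdot A y0 i).
have x0S : x0 \in solset d A b by rewrite in_solset; apply/forallP => i; rewrite ge_min lexx.
have y0S : y0 \in solset d A b by rewrite in_solset; apply/forallP => i; rewrite ge_min lexx orbT.
have blocked k t : nzcol A k -> t != x0 k -> exists i, rowdot A (upd x0 k t) i < b i.
  move=> nzk tk; have [i [Bneg Bsum]] := down k nzk; exists i.
  apply: le_lt_trans (rowdot_upd_corner Bneg tk) _.
  by rewrite lt_min rowdot_inward; apply/andP; split; lra.
have := component_fixes_nzcols blocked (connA b x0 y0 x0S y0S) nzj0.
move=> /(congr1 (fun t : 'I_d.+1 => ((t : nat)%:R : R))) /eqP.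
by rewrite inward_natE j0Y -subr_eq0 addrC addKr; case: ifP => _; rewrite ?oppr_eq0 oner_eq0.
Qed.

End Corner.

Lemma flip_cols_opp (R : realType) m n (A : 'M[R]_(m, n)) (F : {set 'I_n}) p q k :
  opp_rows A p q k -> (k \in F) = (A p k < 0) ->
  flip_cols A F p k = `|A p k| /\ flip_cols A F q k = - `|A q k|.
Proof.
rewrite !mxE => opp_k ->; case: (mulr_lt0P opp_k) => [[p0 q0] | [p0 q0]].
  by rewrite ltNge (ltW p0) /= gtr0_norm // ltr0_norm // opprK.
by rewrite p0 ltr0_norm // gtr0_norm.
Qed.

Lemma flip_cols_eq0 (R : realType) m n (A : 'M[R]_(m, n)) (F : {set 'I_n}) i k :
  A i k = 0 -> flip_cols A F i k = 0.
Proof. by rewrite mxE => ->; rewrite oppr0 if_same. Qed.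

Lemma two_rows_has_EO (R : realType) d m n (A : 'M[R]_(m, n)) p q : (0 < d)%N ->
  (forall i k, i != p -> i != q -> A i k = 0) -> solgraphs_connected d A -> has_EO A.
Proof.
move=> d_gt0.
apply: (has_EO_by_elimination (C := fun B => forall i k, i != p -> i != q -> B i k = 0)).
  by move=> B j CB i k ip iq; rewrite mxE CB //; case: ifP.
move=> B CB connB stuck j1; apply/negP => nz1.
have opp_pq j : nzcol B j -> opp_rows B p q j.
  move=> nzj; have [[i [Bij _]] [i' [Bi'j _]]] := not_can_elimT (stuck j nzj).
  have in_pq i0 : B i0 j != 0 -> (i0 == p) || (i0 == q).
    by apply: contraTT; rewrite negb_or negbK => /andP[i0p i0q]; rewrite CB.
  case/orP: (in_pq i (lt0r_neq0 Bij)) => /eqP ei; case/orP: (in_pq i' (ltr0_neq0 Bi'j)) => /eqP ei';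
    by subst i i'; rewrite /opp_rows; nra.
have [_ [i [_ [j2 j21 Bij2]]]] := not_can_elimT (stuck j1 nz1).
have nz2 : nzcol B j2 by apply/existsP; exists i.
wlog le_q : j1 j2 nz1 nz2 j21 {i Bij2} / `|B q j1| <= `|B q j2|.
  move=> gen; have [le_q|/ltW le_q] := lerP `|B q j1| `|B q j2|; first exact: (gen j1 j2).
  by apply: (gen j2 j1) => //; rewrite eq_sym.
pose F := [set k | B (if k == j2 then q else p) k < 0].
apply: (corner_not_connected d_gt0 (F := F) (Y := [set j1; j2])) connB.
  by exists j1; rewrite // !inE eqxx.
have sum2 i : \sum_(k in [set j1; j2]) flip_cols B F i k = flip_cols B F i j1 + flip_cols B F i j2.
  by rewrite big_setU1 ?big_set1 // inE eq_sym.
have [flip_p1 flip_q1] : flip_cols B F p j1 = `|B p j1| /\ flip_cols B F q j1 = - `|B q j1|.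
  by apply: flip_cols_opp; rewrite ?opp_pq // inE eq_sym (negbTE j21).
have [flip_q2 flip_p2] : flip_cols B F q j2 = `|B q j2| /\ flip_cols B F p j2 = - `|B p j2|.
  by apply: flip_cols_opp; [rewrite opp_rowsC opp_pq | rewrite inE eqxx].
have [p1 q1] := mulr_lt0_neq0 (opp_pq _ nz1); have [p2 q2] := mulr_lt0_neq0 (opp_pq _ nz2).
move=> k nzk; have [->|kj2] := eqVneq k j2.
  exists p; rewrite sum2 flip_p1 flip_p2; move: p1 p2; rewrite -!normr_gt0; split; lra.
have [_ flip_qk] : flip_cols B F p k = `|B p k| /\ flip_cols B F q k = - `|B q k|.
  by apply: flip_cols_opp; rewrite ?opp_pq // inE (negbTE kj2).
have qk : 0 < `|B q k| by rewrite normr_gt0; case: (mulr_lt0_neq0 (opp_pq _ nzk)).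
by exists q; rewrite sum2 flip_qk flip_q1 flip_q2; split; lra.
Qed.

Lemma opp_rows_uniq (R : realType) d m n (A : 'M[R]_(m, n)) p q j1 j2 :
  (0 < d)%N -> solgraphs_connected d A ->
  opp_rows A p q j1 -> opp_rows A p q j2 -> j1 = j2.
Proof.
move=> d_gt0 connA opp1 opp2; apply/eqP/negPn/negP => j12.
pose Apq := keep_rows A [pred i | (i == p) || (i == q)].
have opp_pq j : opp_rows A p q j -> opp_rows Apq p q j by rewrite /opp_rows !mxE !inE !eqxx ?orbT.
apply: (opp_rows_no_EO j12 (opp_pq _ opp1) (opp_pq _ opp2)).
have connApq : solgraphs_connected d Apq by apply: solgraphs_connected_keep_rows.
apply: (two_rows_has_EO (p := p) (q := q) d_gt0 _ connApq).
by move=> i k ip iq; rewrite mxE inE (negbTE ip) (negbTE iq).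
Qed.

Lemma two_cols_stuck_zero (R : realType) m n (A : 'M[R]_(m, n)) : (n <= 2)%N ->
  (forall p q j1 j2, opp_rows A p q j1 -> opp_rows A p q j2 -> j1 = j2) ->
  (forall j, nzcol A j -> ~~ can_elim A setT j) -> forall j, ~~ nzcol A j.
Proof.
move=> n_le2 opp_uniq stuck j; apply/negP => nzj.
have [[i [Aij [k kj Aik]]] [i' [Ai'j [k' k'j Ai'k']]]] := not_can_elimT (stuck j nzj).
have /esym ek := ord_le2_neq n_le2 kj k'j; subst k'.
have nzk : nzcol A k by apply/existsP; exists i.
have [[r [Ark [j' j'k Arj']]] [s [Ask [j'' j''k Asj'']]]] := not_can_elimT (stuck k nzk).
have jk : j != k by rewrite eq_sym.
have ej' := ord_le2_neq n_le2 j'k jk; have ej'' := ord_le2_neq n_le2 j''k jk; subst j' j''.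
have opp_both x y : opp_rows A x y j -> opp_rows A x y k -> False.
  by move=> oppj oppk; move: jk; rewrite (opp_uniq _ _ _ _ oppj oppk) eqxx.
move: Aik Ai'k'; rewrite !neq_lt => /orP[ik|ik] /orP[i'k|i'k].
- move: Arj'; rewrite neq_lt => /orP[rj|rj];
    [apply: (opp_both i r) | apply: (opp_both r i')]; rewrite /opp_rows; nra.
- by apply: (opp_both i i'); rewrite /opp_rows; nra.
- by apply: (opp_both i i'); rewrite /opp_rows; nra.
- move: Asj''; rewrite neq_lt => /orP[sj|sj];
    [apply: (opp_both s i) | apply: (opp_both s i')]; rewrite /opp_rows; nra.
Qed.

Section ThreeRows.
Variables (R : realType) (m n : nat) (A : 'M[R]_(m, n)).
Hypothesis m_le3 : (m <= 3)%N.
Hypothesis opp_uniq : forall p q j1 j2, opp_rows A p q j1 -> opp_rows A p q j2 -> j1 = j2.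
Hypothesis stuck : forall j, nzcol A j -> ~~ can_elim A setT j.

Local Notation opp := (opp_rows A).

Lemma opp_neq_cols p q j1 j2 : opp p q j1 -> opp p q j2 -> j1 != j2 -> False.
Proof. by move=> opp1 opp2; rewrite (opp_uniq opp1 opp2) eqxx. Qed.

Lemma stuck_opp j : nzcol A j -> exists p q, [/\ opp p q j,
  exists2 k, k != j & A p k != 0 & exists2 k, k != j & A q k != 0].
Proof.
move=> nzj; have [[p [Apj other_p]] [q [Aqj other_q]]] := not_can_elimT (stuck nzj).
by exists p, q; split => //; rewrite /opp_rows; nra.
Qed.

Lemma opp_rows3 p q r x y j : p != q -> r != p -> r != q -> opp x y j ->
  [\/ opp p q j, opp p r j | opp q r j].
Proof.
move=> pq rp rq oppj.
have sub2 a b : (x == a) || (x == b) -> (y == a) || (y == b) -> opp a b j.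
  by move=> xab yab; apply: opp_rows_sub2 xab yab oppj.
case: (ord_le3_cases x m_le3 pq rp rq) => ex; case: (ord_le3_cases y m_le3 pq rp rq) => ey;
  subst x y; first [ by move: (opp_rows_neq oppj); rewrite eqxx
                   | by apply: Or31; apply: sub2; rewrite ?eqxx ?orbT
                   | by apply: Or32; apply: sub2; rewrite ?eqxx ?orbT
                   | by apply: Or33; apply: sub2; rewrite ?eqxx ?orbT ].
Qed.

Lemma third_row p q c1 c2 :
  opp p q c1 -> c2 != c1 -> A q c2 != 0 ->
  exists r, [/\ r != p, r != q, opp q r c2 & exists2 c3, c3 != c2 & A r c3 != 0].
Proof.
move=> opp1 c21 Aqc2; have pq := opp_rows_neq opp1.
have not_pq2 : ~ opp p q c2 by move=> opp2; apply: opp_neq_cols opp1 opp2 _; rewrite eq_sym.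
have nz2 : nzcol A c2 by apply/existsP; exists q.
have [x [y [oppxy other_x other_y]]] := stuck_opp nz2.
have [r [rxy rp rq]] : exists r, [/\ (r == x) || (r == y), r != p & r != q].
  case xpq: ((x != p) && (x != q)); first by case/andP: xpq; exists x; rewrite eqxx.
  case ypq: ((y != p) && (y != q)); first by case/andP: ypq; exists y; rewrite eqxx orbT.
  move/negbT: xpq; move/negbT: ypq; rewrite !negb_and !negbK => ypq xpq.
  by case: not_pq2; apply: opp_rows_sub2 xpq ypq oppxy.
exists r; split => //.
  case: (opp_rows3 pq rp rq oppxy) => [/not_pq2 //|opp_pr2|//].
  by case: (opp_rows_split opp_pr2 Aqc2).
by case/orP: rxy => /eqP->.
Qed.

Lemma cyclic_pattern c1 : nzcol A c1 -> exists p q r c2 c3,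
  [/\ opp p q c1, opp q r c2, opp r p c3 & [/\ A r c1 = 0, A p c2 = 0 & A q c3 = 0]].
Proof.
move=> nz1; have [p [q [opp1 [cp cpc1 Apcp] [c2 c21 Aqc2]]]] := stuck_opp nz1.
have [r [rp rq opp2 [c3 c32 Arc3]]] := third_row opp1 c21 Aqc2.
have cases3 := opp_rows3 (opp_rows_neq opp1) rp rq.
have opp_of_nz k i : A i k != 0 -> exists x y, opp x y k.
  move=> Aik; have nzk : nzcol A k by apply/existsP; exists i.
  by have [x [y [oppxy _ _]]] := stuck_opp nzk; exists x, y.
have Arc1 : A r c1 = 0.
  apply/eqP/negPn/negP => Arc1.
  case: (opp_rows_split opp1 Arc1) => [opp_pr1|]; last first.
    by rewrite opp_rowsC => opp_qr1; apply: (opp_neq_cols opp2 opp_qr1).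
  have [x [y /cases3[opp_pq|opp_pr|opp_qr]]] := opp_of_nz _ _ Apcp.
  - by apply: (opp_neq_cols opp1 opp_pq); rewrite eq_sym.
  - by apply: (opp_neq_cols opp_pr1 opp_pr); rewrite eq_sym.
  rewrite -(opp_uniq opp2 opp_qr) in Apcp.
  case: (opp_rows_split opp2 Apcp) => [|opp_pr2].
    by rewrite opp_rowsC => opp_pq2; apply: (opp_neq_cols opp1 opp_pq2); rewrite eq_sym.
  by apply: (opp_neq_cols opp_pr1 opp_pr2); rewrite eq_sym.
have opp3 : opp r p c3.
  have [x [y /cases3[opp_pq|opp_pr|opp_qr]]] := opp_of_nz _ _ Arc3.
  - by move: Arc3; rewrite -(opp_uniq opp1 opp_pq) Arc1 eqxx.
  - by rewrite opp_rowsC.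
  - by move: c32; rewrite -(opp_uniq opp2 opp_qr) eqxx.
have c31 : c3 != c1 by apply: contraTneq Arc3 => ->; rewrite Arc1 eqxx.
have Apc2 : A p c2 = 0.
  apply/eqP/negPn/negP => Apc2; case: (opp_rows_split opp2 Apc2).
    by rewrite opp_rowsC => opp_pq2; apply: (opp_neq_cols opp1 opp_pq2); rewrite eq_sym.
  by rewrite opp_rowsC => opp_rp2; apply: (opp_neq_cols opp3 opp_rp2 c32).
have Aqc3 : A q c3 = 0.
  apply/eqP/negPn/negP => Aqc3; case: (opp_rows_split opp3 Aqc3).
    by rewrite opp_rowsC => opp_qr3; apply: (opp_neq_cols opp2 opp_qr3); rewrite eq_sym.
  by rewrite opp_rowsC => opp_pq3; apply: (opp_neq_cols opp1 opp_pq3); rewrite eq_sym.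
by exists p, q, r, c2, c3.
Qed.

Lemma three_rows_stuck_zero d : (0 < d)%N -> solgraphs_connected d A -> forall j, ~~ nzcol A j.
Proof.
move=> d_gt0 connA c1; apply/negP => nz1.
have [p [q [r [c2 [c3 [opp1 opp2 opp3 [Arc1 Apc2 Aqc3]]]]]]] := cyclic_pattern nz1.
have [p1 q1] := mulr_lt0_neq0 opp1; have [q2 r2] := mulr_lt0_neq0 opp2.
have [r3 p3] := mulr_lt0_neq0 opp3.
have c12 : c1 != c2 by apply: contraTneq p1 => ->; rewrite Apc2 eqxx.
have c23 : c2 != c3 by apply: contraTneq q2 => ->; rewrite Aqc3 eqxx.
have c13 : c1 != c3 by apply: contraTneq r3 => <-; rewrite Arc1 eqxx.
(* Reflect so that the cycle reads (+, -) on (p, q) at c1, on (q, r) at c2 and on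
   (r, p) at c3. *)
pose des k := if k == c1 then p else if k == c2 then q else r.
pose F := [set k | A (des k) k < 0].
have flip_des k x : opp (des k) x k ->
    flip_cols A F (des k) k = `|A (des k) k| /\ flip_cols A F x k = - `|A x k|.
  by move=> oppk; apply: flip_cols_opp; rewrite // inE.
have := flip_des c1 q; rewrite /des eqxx => /(_ opp1) [fp1 fq1].
have := flip_des c2 r; rewrite /des eqxx eq_sym (negbTE c12) => /(_ opp2) [fq2 fr2].
have := flip_des c3 p; rewrite /des eq_sym (negbTE c13) eq_sym (negbTE c23) => /(_ opp3) [fr3 fp3].
apply: (corner_not_connected d_gt0 (F := F) (Y := [set c1; c2; c3])) connA.
  by exists c1; rewrite // !inE eqxx.
have sum3 i : \sum_(k in [set c1; c2; c3]) flip_cols A F i k =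
    flip_cols A F i c1 + flip_cols A F i c2 + flip_cols A F i c3.
  by rewrite -setUA !big_setU1 ?big_set1 /= ?addrA // !inE ?negb_or ?c12 ?c13 ?c23.
move: p1 q1 q2 r2 r3 p3; rewrite -!normr_gt0 => p1 q1 q2 r2 r3 p3.
move=> k nzk; have [x [y [oppxy _ _]]] := stuck_opp nzk.
have rq : r != q by rewrite eq_sym; apply: opp_rows_neq opp2.
case: (opp_rows3 (opp_rows_neq opp1) (opp_rows_neq opp3) rq oppxy).
- move=> /(opp_uniq opp1) <-; exists q.
  by rewrite sum3 fq1 fq2 flip_cols_eq0 //; split; lra.
- rewrite opp_rowsC => /(opp_uniq opp3) <-; exists p.
  by rewrite sum3 fp1 fp3 flip_cols_eq0 //; split; lra.
- move=> /(opp_uniq opp2) <-; exists r.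
  by rewrite sum3 fr2 fr3 flip_cols_eq0 //; split; lra.
Qed.

End ThreeRows.

Theorem theorem2 (R : realType) (d m n : nat) (A : 'M[R]_(m, n)) :
  (0 < d)%N ->
  (forall b : 'I_m -> R, sol_graph_connected (solset d A b)) ->
  (m <= 3)%N \/ (n <= 2)%N ->
  has_EO A.
Proof.
move=> d_gt0 connA m3_or_n2.
apply: (has_EO_by_elimination (C := fun _ => True)) connA => // B _ connB stuck.
have opp_uniq p q j1 j2 : opp_rows B p q j1 -> opp_rows B p q j2 -> j1 = j2.
  exact: opp_rows_uniq d_gt0 connB.
case: m3_or_n2 => [m_le3|n_le2].
  exact: three_rows_stuck_zero m_le3 opp_uniq stuck d d_gt0 connB.
exact: two_cols_stuck_zero n_le2 opp_uniq stuck.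
Qed.
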